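(* Let $\Delta$ be a group acting (without inversions) $k$-acylindrically, cocompactly and minimally on a tree $X$. Let $H$ be a finitely generated subgroup of $\Delta$, and suppose that $M<H$ is a non-trivial subgroup that is normal in $\Delta$. Then the action of $H$ on $X$ is cocompact.
   Context: An action on a tree is $k$-acylindrical if the stabilizer of every geodesic edge-path of length greater than $k$ is trivial. An action on a tree is minimal if there is no proper invariant subtree, and cocompact if the quotient graph is finite. *)

From Stdlib Require Import List.
Import ListNotations.
Set Implicit Arguments.

Definition is_group {G : Type} (mul : G -> G -> G) (inv : G -> G) (e : G) : Prop :=
  (forall a b c, mul a (mul b c) = mul (mul a b) c) /\
  (forall a, mul e a = a) /\ (forall a, mul a e = a) /\
  (forall a, mul (inv a) a = e) /\ (forall a, mul a (inv a) = e).

Definition is_subgroup {G : Type} (mul : G -> G -> G) (inv : G -> G) (e : G)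
  (H : G -> Prop) : Prop :=
  H e /\ (forall a b, H a -> H b -> H (mul a b)) /\ (forall a, H a -> H (inv a)).

Definition generated_by {G : Type} (mul : G -> G -> G) (inv : G -> G) (e : G)
  (S : list G) (x : G) : Prop :=
  forall K : G -> Prop, is_subgroup mul inv e K -> (forall s, In s S -> K s) -> K x.

Definition finitely_generated {G : Type} (mul : G -> G -> G) (inv : G -> G) (e : G)
  (H : G -> Prop) : Prop :=
  exists S : list G, forall x, H x <-> generated_by mul inv e S x.

Definition normal_in_group {G : Type} (mul : G -> G -> G) (inv : G -> G)
  (M : G -> Prop) : Prop :=
  forall g m, M m -> M (mul (mul g m) (inv g)).

Fixpoint is_path {V : Type} (adj : V -> V -> Prop) (p : list V) : Prop :=
  match p with
  | x :: ((y :: _) as q) => adj x y /\ is_path adj q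
  | _ => True
  end.

Fixpoint no_backtrack {V : Type} (p : list V) : Prop :=
  match p with
  | x :: ((_ :: z :: _) as q) => x <> z /\ no_backtrack q
  | _ => True
  end.

Definition path_from_to {V : Type} (adj : V -> V -> Prop) (p : list V) (x y : V) : Prop :=
  is_path adj p /\ hd_error p = Some x /\ last p x = y.

Definition is_tree {V : Type} (adj : V -> V -> Prop) : Prop :=
  (forall x y, adj x y -> adj y x) /\
  (forall x, ~ adj x x) /\
  (forall x y, exists p, path_from_to adj p x y) /\
  (forall p x, path_from_to adj p x x -> 2 <= length p -> ~ no_backtrack p).

(** geodesic edge-path: a path of minimal length between its endpoints;
    its length (number of edges) is length p - 1 *)
Definition geodesic {V : Type} (adj : V -> V -> Prop) (p : list V) : Prop :=
  exists x y, path_from_to adj p x y /\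
    forall q, path_from_to adj q x y -> length p <= length q.

Definition subtree {V : Type} (adj : V -> V -> Prop) (S : V -> Prop) : Prop :=
  (exists v, S v) /\
  (forall x y, S x -> S y ->
     exists p, path_from_to adj p x y /\ forall v, In v p -> S v).

Definition is_action {G V : Type} (mul : G -> G -> G) (e : G) (act : G -> V -> V) : Prop :=
  (forall x, act e x = x) /\ (forall g h x, act (mul g h) x = act g (act h x)).

Definition by_automorphisms {G V : Type} (adj : V -> V -> Prop) (act : G -> V -> V) : Prop :=
  forall g x y, adj x y <-> adj (act g x) (act g y).

Definition without_inversions {G V : Type} (adj : V -> V -> Prop) (act : G -> V -> V) : Prop :=
  forall g x y, adj x y -> ~ (act g x = y /\ act g y = x).

Definition k_acylindrical {G V : Type} (e : G) (adj : V -> V -> Prop) (act : G -> V -> V)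
  (k : nat) : Prop :=
  forall (p : list V) (g : G), geodesic adj p -> k < length p - 1 ->
    (forall v, In v p -> act g v = v) -> g = e.

Definition minimal_action {G V : Type} (adj : V -> V -> Prop) (act : G -> V -> V) : Prop :=
  forall S : V -> Prop, subtree adj S -> (forall g v, S v -> S (act g v)) ->
    forall v, S v.

(** the action restricted to the subgroup H is cocompact: the quotient graph
    H\X is finite, i.e. finitely many H-orbits of vertices and of (oriented) edges *)
Definition cocompact_on {G V : Type} (H : G -> Prop) (adj : V -> V -> Prop)
  (act : G -> V -> V) : Prop :=
  (exists Vs : list V, forall v, exists g w, H g /\ In w Vs /\ act g w = v) /\
  (exists Es : list (V * V), forall x y, adj x y ->
     exists g a b, H g /\ In (a, b) Es /\ act g a = x /\ act g b = y).

(* The heart of the proof is that M acts minimally on X.  Let Z be a nonempty convex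
   M-invariant set of vertices, pq an edge leaving it, and m <> 1 in M.  Minimality of the
   Delta-action gives translates of every vertex beyond any edge, and vertices of degree >= 2.
   If m fixes a vertex c, take d with d c far beyond q: d m d^-1 lies in M, so it fixes d c and
   also a point of Z, hence a segment longer than k, against acylindricity.  If m fixes no
   vertex, a point of minimal displacement of m lies in every m-invariant subtree, and some
   translate of it lies beyond q.  Either way q is in Z.
   For a finite connected set K of vertices containing v0 and s v0 for the generators s of H,
   the H-translates of K form an H-invariant, hence M-invariant, subtree, which is therefore
   everything: K and K x K represent all H-orbits of vertices and edges. *)

From Pilot Require Import Defs.
From Stdlib Require Import List Lia PeanoNat Classical Wf_nat.
Import ListNotations.
Set Implicit Arguments.

Lemma least_nat (P : nat -> Prop) : (exists n, P n) -> exists n, P n /\ forall m, P m -> n <= m.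
Proof.
  intros Hex.
  destruct (dec_inh_nat_subset_has_unique_least_element P (fun n => classic (P n)) Hex)
    as [n [Hn _]].
  now exists n.
Qed.

Lemma max_index (P : nat -> Prop) N :
  P 0 -> exists j, j <= N /\ P j /\ forall i, j < i <= N -> ~ P i.
Proof.
  intros H0. induction N as [|N IH].
  - exists 0. repeat split; auto. intros i Hi. lia.
  - destruct IH as [j [H1 [H2 H3]]]. destruct (classic (P (S N))).
    + exists (S N). repeat split; auto. intros i Hi. lia.
    + exists j. repeat split; auto. intros i Hi. destruct (Nat.eq_dec i (S N)); [subst; auto|].
      apply H3. lia.
Qed.

(** Paths as in [Defs], reformulated by indices so that they behave well under
    [rev], [firstn], [skipn] and concatenation. *)
Section PathsByIndex.
Variable V : Type.
Implicit Types (R : V -> V -> Prop) (p q l : list V).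

Definition is_path_nth R p : Prop :=
  forall i a b, nth_error p i = Some a -> nth_error p (S i) = Some b -> R a b.

Definition no_backtrack_nth p : Prop :=
  forall i a c, nth_error p i = Some a -> nth_error p (S (S i)) = Some c -> a <> c.

Definition walk R p (x y : V) : Prop :=
  is_path_nth R p /\ nth_error p 0 = Some x /\ nth_error p (length p - 1) = Some y.

Lemma is_path_nth_cons2 R a b l : is_path_nth R (a :: b :: l) <-> R a b /\ is_path_nth R (b :: l).
Proof.
  split.
  - intros H; split; [apply (H 0); reflexivity|]. intros i x y H1 H2. apply (H (S i)); assumption.
  - intros [H1 H2] [|i] x y E1 E2; simpl in *.
    + inversion E1; inversion E2; subst; auto.
    + apply (H2 i); assumption.
Qed.

Lemma is_path_nth_short R l : length l <= 1 -> is_path_nth R l.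
Proof.
  intros Hl i a b _ E. assert (length l <= S i) by lia.
  rewrite (proj2 (nth_error_None l (S i))) in E; [discriminate|lia].
Qed.

Lemma no_backtrack_nth_cons3 a b c l :
  no_backtrack_nth (a :: b :: c :: l) <-> a <> c /\ no_backtrack_nth (b :: c :: l).
Proof.
  split.
  - intros H; split; [apply (H 0); reflexivity|]. intros i x y H1 H2. apply (H (S i)); assumption.
  - intros [H1 H2] [|i] x y E1 E2; simpl in *.
    + inversion E1; inversion E2; subst; auto.
    + apply (H2 i); assumption.
Qed.

Lemma no_backtrack_nth_short l : length l <= 2 -> no_backtrack_nth l.
Proof.
  intros Hl i a b _ E. assert (length l <= S (S i)) by lia.
  rewrite (proj2 (nth_error_None l (S (S i)))) in E; [discriminate|lia].
Qed.

Lemma no_backtrack_nth_tail a l : no_backtrack_nth (a :: l) -> no_backtrack_nth l.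
Proof. intros H i x y E1 E2. apply (H (S i)); assumption. Qed.

Lemma is_path_nthP R p : is_path R p <-> is_path_nth R p.
Proof.
  induction p as [|a [|b p] IH].
  1-2: simpl; split; auto; intros _; apply is_path_nth_short; simpl; lia.
  - rewrite is_path_nth_cons2, <- IH. reflexivity.
Qed.

Lemma no_backtrack_nthP p : no_backtrack p <-> no_backtrack_nth p.
Proof.
  induction p as [|a [|b [|c p]] IH].
  1-3: simpl; split; auto; intros _; apply no_backtrack_nth_short; simpl; lia.
  rewrite no_backtrack_nth_cons3, <- IH. reflexivity.
Qed.

Lemma nth_error_app_cons_l l1 (w : V) l2 i : i <= length l1 ->
  nth_error (l1 ++ w :: l2) i = nth_error (l1 ++ [w]) i.
Proof.
  intros Hi. destruct (Nat.lt_ge_cases i (length l1)).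
  - rewrite !nth_error_app1 by lia. auto.
  - rewrite !nth_error_app2 by lia. replace (i - length l1) with 0 by lia. auto.
Qed.

Lemma nth_error_app_cons_r l1 (w : V) l2 i : length l1 <= i ->
  nth_error (l1 ++ w :: l2) i = nth_error (w :: l2) (i - length l1).
Proof. intros Hi. rewrite nth_error_app2 by lia. auto. Qed.

Lemma is_path_nth_app R l1 w l2 :
  is_path_nth R (l1 ++ [w]) -> is_path_nth R (w :: l2) -> is_path_nth R (l1 ++ w :: l2).
Proof.
  intros H1 H2 i a b E1 E2.
  destruct (Nat.lt_ge_cases i (length l1)).
  - rewrite nth_error_app_cons_l in E1, E2 by lia. eauto.
  - rewrite nth_error_app_cons_r in E1, E2 by lia. apply (H2 (i - length l1)); auto.
    replace (S (i - length l1)) with (S i - length l1) by lia. auto.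
Qed.

Lemma no_backtrack_nth_app l1 w l2 :
  no_backtrack_nth (l1 ++ [w]) -> no_backtrack_nth (w :: l2) ->
  (forall a b, nth_error l1 (length l1 - 1) = Some a -> nth_error l2 0 = Some b -> a <> b) ->
  no_backtrack_nth (l1 ++ w :: l2).
Proof.
  intros H1 H2 H3 i a c E1 E2.
  destruct (Nat.lt_ge_cases (S (S i)) (length l1 + 1)).
  - rewrite nth_error_app_cons_l in E1, E2 by lia. eauto.
  - destruct (Nat.lt_ge_cases i (length l1)).
    + assert (i = length l1 - 1) by lia. subst i.
      rewrite nth_error_app1 in E1 by lia.
      rewrite nth_error_app2 in E2 by lia.
      replace (S (S (length l1 - 1)) - length l1) with 1 in E2 by lia.
      apply H3; auto.
    + rewrite nth_error_app_cons_r in E1, E2 by lia. apply (H2 (i - length l1)); auto.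
      replace (S (S (i - length l1))) with (S (S i) - length l1) by lia. auto.
Qed.

Lemma is_path_nth_rev R p : (forall x y, R x y -> R y x) -> is_path_nth R p -> is_path_nth R (rev p).
Proof.
  intros Hs H i a b E1 E2. rewrite nth_error_rev in E1, E2.
  destruct (Nat.ltb_spec i (length p)); [|discriminate].
  destruct (Nat.ltb_spec (S i) (length p)); [|discriminate].
  apply Hs. apply (H (length p - S (S i))); auto.
  replace (S (length p - S (S i))) with (length p - S i) by lia. auto.
Qed.

Lemma no_backtrack_nth_rev p : no_backtrack_nth p -> no_backtrack_nth (rev p).
Proof.
  intros H i a b E1 E2. rewrite nth_error_rev in E1, E2.
  destruct (Nat.ltb_spec i (length p)); [|discriminate].
  destruct (Nat.ltb_spec (S (S i)) (length p)); [|discriminate].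
  intro; subst. apply (H (length p - S (S (S i))) b b); auto.
  replace (S (S (length p - S (S (S i))))) with (length p - S i) by lia. auto.
Qed.

Lemma is_path_nth_firstn R n p : is_path_nth R p -> is_path_nth R (firstn n p).
Proof.
  intros H i a b E1 E2. rewrite nth_error_firstn in E1, E2.
  destruct (Nat.ltb_spec i n); [|discriminate].
  destruct (Nat.ltb_spec (S i) n); [|discriminate]. eauto.
Qed.

Lemma is_path_nth_skipn R n p : is_path_nth R p -> is_path_nth R (skipn n p).
Proof.
  intros H i a b E1 E2. rewrite nth_error_skipn in E1, E2.
  apply (H (n + i)); auto. rewrite <- E2. f_equal. lia.
Qed.

Lemma no_backtrack_nth_firstn n p : no_backtrack_nth p -> no_backtrack_nth (firstn n p).
Proof.
  intros H i a b E1 E2. rewrite nth_error_firstn in E1, E2.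
  destruct (Nat.ltb_spec i n); [|discriminate].
  destruct (Nat.ltb_spec (S (S i)) n); [|discriminate]. eauto.
Qed.

Lemma no_backtrack_nth_skipn n p : no_backtrack_nth p -> no_backtrack_nth (skipn n p).
Proof.
  intros H i a b E1 E2. rewrite nth_error_skipn in E1, E2.
  apply (H (n + i)); auto. rewrite <- E2. f_equal. lia.
Qed.

Lemma nth_error_last p x : p <> [] -> nth_error p (length p - 1) = Some (last p x).
Proof.
  induction p as [|a [|b p] IH]; intros H; [congruence|reflexivity|].
  simpl length. replace (S (S (length p)) - 1) with (S (length p)) by lia.
  simpl nth_error. specialize (IH ltac:(congruence)). simpl length in IH.
  replace (S (length p) - 1) with (length p) in IH by lia. rewrite IH. reflexivity.
Qed.

Lemma nth_error_rev_pred p : 2 <= length p -> nth_error (rev p) (length p - 2) = nth_error p 1.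
Proof.
  intros H. rewrite nth_error_rev. destruct (Nat.ltb_spec (length p - 2) (length p)); [|lia].
  f_equal. lia.
Qed.

Lemma nth_error_rev_last (a : V) r : nth_error (rev (a :: r)) (length (rev (a :: r)) - 1) = Some a.
Proof.
  rewrite nth_error_rev, length_rev.
  destruct (Nat.ltb_spec (length (a :: r) - 1) (length (a :: r))); [|simpl in *; lia].
  replace (length (a :: r) - S (length (a :: r) - 1)) with 0 by (simpl; lia). reflexivity.
Qed.

Lemma walk_path_from_to R p x y : path_from_to R p x y <-> walk R p x y.
Proof.
  unfold path_from_to, walk. rewrite is_path_nthP.
  destruct p as [|a p].
  - simpl. split; intros H; decompose [and] H; discriminate.
  - rewrite (@nth_error_last (a :: p) x) by congruence. simpl hd_error. simpl nth_error at 1.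
    split; intros [H1 [H2 H3]]; repeat split; try congruence; auto.
Qed.

Lemma walk_length R p x y : walk R p x y -> 1 <= length p.
Proof. intros [_ [H _]]. destruct p; simpl in *; [discriminate|lia]. Qed.

Lemma walk_head R p x y : walk R p x y -> p = x :: tl p.
Proof. intros [_ [H _]]. destruct p; simpl in *; [discriminate|congruence]. Qed.

Lemma walk_length1 R p x y : walk R p x y -> length p <= 1 -> x = y.
Proof.
  intros [_ [H0 H1]] Hl. destruct p as [|a [|b p]]; simpl in *; [discriminate| |lia]. congruence.
Qed.

Lemma length_app_tl_walk R A B w y : walk R B w y -> length (A ++ tl B) = length A + length B - 1.
Proof. intros HB. rewrite (walk_head HB) at 2. rewrite length_app. simpl. lia. Qed.

Lemma walk_refl R x : walk R [x] x x.
Proof. split; [apply is_path_nth_short; simpl; lia|split; reflexivity]. Qed.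

Lemma walk_pair R x y : R x y -> walk R [x; y] x y.
Proof.
  intros H. split; [|split; reflexivity].
  apply is_path_nth_cons2. split; auto. apply is_path_nth_short; simpl; lia.
Qed.

Lemma walk_rev R p x y : (forall a b, R a b -> R b a) -> walk R p x y -> walk R (rev p) y x.
Proof.
  intros Hs Hw. pose proof (walk_length Hw). destruct Hw as [H1 [H2 H3]].
  repeat split.
  - apply is_path_nth_rev; auto.
  - rewrite nth_error_rev. destruct (Nat.ltb_spec 0 (length p)); [|lia].
    rewrite <- H3. f_equal; lia.
  - rewrite nth_error_rev, length_rev. destruct (Nat.ltb_spec (length p - 1) (length p)); [|lia].
    rewrite <- H2. f_equal; lia.
Qed.

Lemma walk_app R l1 w l2 x y :
  walk R (l1 ++ [w]) x w -> walk R (w :: l2) w y -> walk R (l1 ++ w :: l2) x y.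
Proof.
  intros [A1 [A2 A3]] [B1 [B2 B3]]. repeat split.
  - apply is_path_nth_app; auto.
  - rewrite nth_error_app_cons_l by lia. auto.
  - rewrite nth_error_app_cons_r by (rewrite length_app; simpl; lia).
    rewrite <- B3. f_equal. rewrite length_app. simpl. lia.
Qed.

Lemma walk_split_last R A x w : walk R A x w -> A = removelast A ++ [w].
Proof.
  intros [_ [H1 H2]]. assert (NA : A <> []) by (destruct A; simpl in *; congruence).
  rewrite (app_removelast_last w NA) at 1. f_equal.
  rewrite (nth_error_last w NA) in H2. congruence.
Qed.

Lemma walk_cat R A B x w y : walk R A x w -> walk R B w y -> walk R (A ++ tl B) x y.
Proof.
  intros HA HB. rewrite (walk_split_last HA), <- app_assoc.
  apply walk_app; [now rewrite <- (walk_split_last HA)|].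
  now rewrite <- (walk_head HB).
Qed.

Lemma walk_firstn R p x y i w : walk R p x y -> nth_error p i = Some w -> walk R (firstn (S i) p) x w.
Proof.
  intros [H1 [H2 H3]] E. assert (i < length p) by (apply nth_error_Some; congruence).
  repeat split.
  - apply is_path_nth_firstn; auto.
  - rewrite nth_error_firstn. destruct (Nat.ltb_spec 0 (S i)); [auto|lia].
  - rewrite nth_error_firstn, length_firstn. replace (min (S i) (length p) - 1) with i by lia.
    destruct (Nat.ltb_spec i (S i)); [auto|lia].
Qed.

Lemma walk_skipn R p x y i w : walk R p x y -> nth_error p i = Some w -> walk R (skipn i p) w y.
Proof.
  intros [H1 [H2 H3]] E. assert (i < length p) by (apply nth_error_Some; congruence).
  repeat split.
  - apply is_path_nth_skipn; auto.
  - rewrite nth_error_skipn. rewrite <- E. f_equal; lia.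
  - rewrite nth_error_skipn, length_skipn. rewrite <- H3. f_equal; lia.
Qed.

Lemma last_default l (a b : V) : l <> [] -> last l a = last l b.
Proof.
  induction l as [|c [|d l] IH]; intros H; [congruence|reflexivity|].
  apply IH. congruence.
Qed.

Lemma last_cons2 l (a d d' : V) : l <> [] -> last (a :: l) d = last l d'.
Proof.
  intros H. destruct l as [|b l]; [congruence|].
  change (last (b :: l) d = last (b :: l) d'). apply last_default. congruence.
Qed.

Lemma reduce_path R l x : is_path_nth R (x :: l) ->
  exists l', is_path_nth R (x :: l') /\ no_backtrack_nth (x :: l') /\
    last (x :: l') x = last (x :: l) x /\ length l' <= length l.
Proof.
  revert x. induction l as [|y l IH]; intros x H.
  - exists []. repeat split; auto. apply no_backtrack_nth_short; simpl; lia.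
  - apply is_path_nth_cons2 in H. destruct H as [Hxy H].
    destruct (IH y H) as [[|z l2] [P1 [N1 [L1 Len1]]]].
    + exists [y]. split; [|split; [|split]].
      * apply is_path_nth_cons2. split; [auto|apply is_path_nth_short; simpl; lia].
      * apply no_backtrack_nth_short; simpl; lia.
      * simpl in L1. simpl. destruct l; auto. rewrite L1. apply last_default. congruence.
      * simpl. lia.
    + destruct (classic (z = x)) as [->|Nzx].
      * exists l2. split; [|split; [|split]].
        -- apply is_path_nth_cons2 in P1. tauto.
        -- apply no_backtrack_nth_tail in N1. auto.
        -- transitivity (last (y :: x :: l2) y).
           ++ simpl. destruct l2; auto. apply last_default. congruence.
           ++ rewrite L1. simpl. destruct l; auto. apply last_default. congruence.
        -- simpl in Len1. simpl. lia.
      * exists (y :: z :: l2). split; [|split; [|split]].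
        -- apply is_path_nth_cons2. split; auto.
        -- apply no_backtrack_nth_cons3. split; auto; congruence.
        -- rewrite (@last_cons2 (y :: z :: l2) x x y) by congruence.
           rewrite (@last_cons2 (y :: l) x x y) by congruence. auto.
        -- simpl in *. lia.
Qed.

Lemma reduce_walk R p x y : walk R p x y ->
  exists q, walk R q x y /\ no_backtrack_nth q /\ length q <= length p.
Proof.
  intros [H1 [H2 H3]]. destruct p as [|a l]; [discriminate|]. simpl in H2. inversion H2; subst a.
  destruct (reduce_path H1) as [l' [P [N [L Le]]]].
  exists (x :: l'). repeat split; auto.
  - rewrite (@nth_error_last (x :: l') x) by congruence. rewrite L.
    rewrite (@nth_error_last (x :: l) x) in H3 by congruence. auto.
  - simpl. lia.
Qed.

Lemma walk_mono R R' p x y : (forall a b, R a b -> R' a b) -> walk R p x y -> walk R' p x y.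
Proof. intros HR [H1 H2]. split; auto. intros i a b E1 E2. eapply HR, H1; eauto. Qed.

Definition within R (K : list V) (a b : V) : Prop := R a b /\ In a K /\ In b K.

Lemma walk_within R p x y : walk R p x y -> walk (within R p) p x y.
Proof.
  intros [H1 H2]. split; auto. intros i a b E1 E2.
  split; [eapply H1; eauto|split; eapply nth_error_In; eauto].
Qed.

Lemma connected_hull R (v0 : V) ys : (forall y, exists p, walk R p v0 y) ->
  exists K, In v0 K /\ (forall y, In y ys -> In y K) /\
    forall a, In a K -> exists p, walk (within R K) p v0 a.
Proof.
  intros Hconn. induction ys as [|y ys [K [H0 [Hys HS]]]].
  - exists [v0]. split; [now left|split; [intros y []|]].
    intros a [<-|[]]. exists [v0]. apply walk_refl.
  - destruct (Hconn y) as [p Hp].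
    assert (Hsub : forall a b, within R p a b -> within R (p ++ K) a b).
    { intros a b [Hab [Ha Hb]]. split; [|split]; auto; apply in_or_app; now left. }
    assert (Hsub' : forall a b, within R K a b -> within R (p ++ K) a b).
    { intros a b [Hab [Ha Hb]]. split; [|split]; auto; apply in_or_app; now right. }
    exists (p ++ K). split; [apply in_or_app; now right|split].
    + intros z [<-|Hz]; apply in_or_app; [left|right; auto].
      destruct Hp as [_ [_ Hl]]. eapply nth_error_In; eauto.
    + intros a Ha. apply in_app_or in Ha as [Ha|Ha].
      * apply In_nth_error in Ha as [i Ei]. exists (firstn (S i) p).
        eapply walk_mono; [exact Hsub|]. exact (walk_firstn i (walk_within Hp) Ei).
      * destruct (HS a Ha) as [q Hq]. exists q. eapply walk_mono; [exact Hsub'|exact Hq].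
Qed.

End PathsByIndex.

Lemma walk_map (V W : Type) (R : V -> V -> Prop) (R' : W -> W -> Prop) (f : V -> W) p x y :
  (forall a b, R a b -> R' (f a) (f b)) -> walk R p x y -> walk R' (map f p) (f x) (f y).
Proof.
  intros Hf [H1 [H2 H3]]. split; [|split].
  - intros i a b E1 E2. rewrite nth_error_map in E1, E2.
    destruct (nth_error p i) eqn:F1; [|discriminate].
    destruct (nth_error p (S i)) eqn:F2; [|discriminate].
    simpl in *. inversion E1; inversion E2; subst. apply Hf. apply (H1 i); auto.
  - rewrite nth_error_map, H2. reflexivity.
  - rewrite length_map, nth_error_map, H3. reflexivity.
Qed.

Lemma no_backtrack_nth_map (V W : Type) (f : V -> W) p :
  (forall x y, f x = f y -> x = y) -> no_backtrack_nth p -> no_backtrack_nth (map f p).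
Proof.
  intros Hf H i a b E1 E2. rewrite nth_error_map in E1, E2.
  destruct (nth_error p i) eqn:F1; [|discriminate].
  destruct (nth_error p (S (S i))) eqn:F2; [|discriminate].
  simpl in *. inversion E1; inversion E2; subst. intro E. apply Hf in E.
  apply (H i v v0); auto.
Qed.

Section Tree.
Variable V : Type.
Variable adj : V -> V -> Prop.
Hypothesis Htree : is_tree adj.
Implicit Types (p q l : list V) (Z : V -> Prop).

Lemma adj_sym x y : adj x y -> adj y x.
Proof. apply Htree. Qed.

Lemma adj_irrefl x : ~ adj x x.
Proof. apply Htree. Qed.

Lemma walk_exists x y : exists p, walk adj p x y.
Proof.
  destruct (proj1 (proj2 (proj2 Htree)) x y) as [p Hp].
  exists p. now apply walk_path_from_to.
Qed.

Lemma closed_walk_backtracks p x : walk adj p x x -> 2 <= length p -> ~ no_backtrack_nth p.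
Proof.
  intros Hw Hl Hn. apply (proj2 (proj2 (proj2 Htree)) p x); auto.
  - now apply walk_path_from_to.
  - now apply no_backtrack_nthP.
Qed.

(** In a tree a reduced path is the geodesic segment between its endpoints. *)
Definition segment p (x y : V) : Prop := walk adj p x y /\ no_backtrack_nth p.

Lemma segment_exists x y : exists p, segment p x y.
Proof.
  destruct (walk_exists x y) as [p Hp].
  destruct (reduce_walk Hp) as [q [Hq [Nq _]]]. now exists q.
Qed.

Lemma segment_refl x : segment [x] x x.
Proof. split; [apply walk_refl|apply no_backtrack_nth_short; simpl; lia]. Qed.

Lemma segment_pair x y : adj x y -> segment [x; y] x y.
Proof. intros H. split; [now apply walk_pair|apply no_backtrack_nth_short; simpl; lia]. Qed.

Lemma segment_rev p x y : segment p x y -> segment (rev p) y x.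
Proof.
  intros [H1 H2]. split; [apply walk_rev; auto; exact adj_sym|now apply no_backtrack_nth_rev].
Qed.

Lemma segment_firstn p x y i w : segment p x y -> nth_error p i = Some w ->
  segment (firstn (S i) p) x w.
Proof. intros [A B] E. split; [eapply walk_firstn; eauto|now apply no_backtrack_nth_firstn]. Qed.

Lemma segment_skipn p x y i w : segment p x y -> nth_error p i = Some w -> segment (skipn i p) w y.
Proof. intros [A B] E. split; [eapply walk_skipn; eauto|now apply no_backtrack_nth_skipn]. Qed.

Lemma segment_tl x a r y : segment (x :: a :: r) x y -> segment (a :: r) a y.
Proof. intros H. exact (segment_skipn 1 H eq_refl). Qed.

Lemma segment_app l1 w l2 x y : segment (l1 ++ [w]) x w -> segment (w :: l2) w y ->
  (forall a b, nth_error l1 (length l1 - 1) = Some a -> nth_error l2 0 = Some b -> a <> b) ->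
  segment (l1 ++ w :: l2) x y.
Proof.
  intros [A1 A2] [B1 B2] H. split; [eapply walk_app; eauto|now apply no_backtrack_nth_app].
Qed.

Lemma segment_cat A B x w y : segment A x w -> segment B w y ->
  (forall a b, 2 <= length A -> nth_error A (length A - 2) = Some a -> nth_error B 1 = Some b ->
     a <> b) ->
  segment (A ++ tl B) x y.
Proof.
  intros HA HB J.
  pose proof (walk_split_last (proj1 HA)) as EA. pose proof (walk_head (proj1 HB)) as EB.
  rewrite EA, <- app_assoc. simpl.
  apply segment_app; [rewrite <- EA; auto|rewrite <- EB; auto|].
  intros a b E1 E2. apply J.
  - rewrite EA, length_app. simpl. destruct (removelast A); simpl in *; [discriminate|lia].
  - rewrite EA, length_app. simpl.
    rewrite nth_error_app1 by (destruct (removelast A); simpl in *; [discriminate|lia]).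
    rewrite <- E1. f_equal. lia.
  - rewrite EB. auto.
Qed.

(* Two different segments from x to y would glue, reversed, into a reduced closed walk. *)
Lemma segment_unique_tail l : forall x y l', segment (x :: l) x y -> segment (x :: l') x y -> l = l'.
Proof.
  induction l as [|a r IH]; intros x y [|b r'] H1 H2; [reflexivity| | |].
  - exfalso. destruct H1 as [[_ [_ E]] _]. simpl in E. inversion E; subst y.
    destruct H2 as [W N]. apply (closed_walk_backtracks W); simpl; auto. lia.
  - exfalso. destruct H2 as [[_ [_ E]] _]. simpl in E. inversion E; subst y.
    destruct H1 as [W N]. apply (closed_walk_backtracks W); simpl; auto. lia.
  - destruct (classic (a = b)) as [<-|E].
    + f_equal. apply (IH a y); eapply segment_tl; eauto.
    + exfalso. assert (HW : segment (rev (a :: r) ++ x :: b :: r') y y).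
      { apply segment_app with (w := x).
        - change (rev (a :: r) ++ [x]) with (rev (x :: a :: r)). now apply segment_rev.
        - auto.
        - intros a' b' E1 E2. rewrite nth_error_rev_last in E1. simpl in E2. congruence. }
      destruct HW as [W N]. apply (closed_walk_backtracks W); auto. rewrite length_app. simpl. lia.
Qed.

Lemma segment_unique p q x y : segment p x y -> segment q x y -> p = q.
Proof.
  intros H1 H2. pose proof (walk_head (proj1 H1)) as E1. pose proof (walk_head (proj1 H2)) as E2.
  destruct p as [|a p]; [discriminate|]. destruct q as [|b q]; [discriminate|].
  simpl in E1, E2. inversion E1; inversion E2; subst. f_equal. eapply segment_unique_tail; eauto.
Qed.

(** Reducing an [R]-walk yields the segment, so its edges are [R]-edges. *)
Lemma segment_path_of_walk (R : V -> V -> Prop) q p x y : (forall a b, R a b -> adj a b) ->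
  walk R q x y -> segment p x y -> is_path_nth R p.
Proof.
  intros HR Hq Hp. destruct (reduce_walk Hq) as [q' [Hq' [N _]]].
  rewrite (segment_unique Hp (conj (walk_mono adj HR Hq') N)). apply Hq'.
Qed.

Lemma segment_geodesic p x y : segment p x y -> geodesic adj p.
Proof.
  intros Hp. exists x, y. split; [apply walk_path_from_to, Hp|].
  intros q Hq. apply walk_path_from_to in Hq.
  destruct (reduce_walk Hq) as [q' [Hq' [N Le]]].
  now rewrite (segment_unique Hp (conj Hq' N)).
Qed.

Lemma segment_nth_inj p x y i j v : segment p x y ->
  nth_error p i = Some v -> nth_error p j = Some v -> i = j.
Proof.
  assert (Hlt : forall p x y, segment p x y ->
    forall i' j' v', i' < j' -> nth_error p i' = Some v' -> nth_error p j' = Some v' -> False).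
  { clear - Htree. intros p x y Hp i j v Hij Ei Ej.
    pose proof (segment_firstn j Hp Ej) as H1.
    assert (Ei' : nth_error (firstn (S j) p) i = Some v).
    { rewrite nth_error_firstn. destruct (Nat.ltb_spec i (S j)); [auto|lia]. }
    destruct (segment_skipn i H1 Ei') as [W N].
    apply (closed_walk_backtracks W); auto. rewrite length_skipn, length_firstn.
    assert (j < length p) by (apply nth_error_Some; congruence). lia. }
  intros Hp Ei Ej. destruct (Nat.lt_trichotomy i j) as [H|[H|H]]; auto; exfalso; eauto.
Qed.

Lemma exit_edge Z z v : Z z -> ~ Z v -> exists a b, adj a b /\ Z a /\ ~ Z b.
Proof.
  intros Hz Hv. destruct (walk_exists z v) as [P [H1 [H2 H3]]].
  destruct (least_nat (fun i => exists b, nth_error P i = Some b /\ ~ Z b)) as [[|i] [[b [Eb Nb]] Hl]].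
  { exists (length P - 1). eauto. }
  { rewrite H2 in Eb. inversion Eb; subst. contradiction. }
  destruct (nth_error P i) as [a|] eqn:Ea.
  2:{ apply nth_error_None in Ea. assert (S i < length P) by (apply nth_error_Some; congruence). lia. }
  exists a, b. split; [apply (H1 i); auto|split; auto].
  apply NNPP. intros Na. specialize (Hl i (ex_intro _ a (conj Ea Na))). lia.
Qed.

Lemma nearest_point Z x z : Z z -> exists a R, Z a /\ segment R x a /\
  forall i v, S i < length R -> nth_error R i = Some v -> ~ Z v.
Proof.
  intros Hz.
  destruct (least_nat (fun n => exists a R, Z a /\ segment R x a /\ length R = n))
    as [n [[a [R [Ha [HR <-]]]] Hmin]].
  { destruct (segment_exists x z) as [R HR]. exists (length R), z, R. auto. }
  exists a, R. split; [|split]; auto. intros i v Hi Ei Hv.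
  specialize (Hmin _ (ex_intro _ v (ex_intro _ _ (conj Hv (conj (segment_firstn i HR Ei) eq_refl))))).
  rewrite length_firstn in Hmin. lia.
Qed.

Definition convex Z : Prop := forall p x y v, Z x -> Z y -> segment p x y -> In v p -> Z v.

Lemma convex_subtree Z : convex Z -> (exists v, Z v) -> subtree adj Z.
Proof.
  intros HC Hne. split; auto. intros x y Hx Hy. destruct (segment_exists x y) as [p Hp].
  exists p. split; [apply walk_path_from_to, Hp|]. intros v Hv. exact (HC p x y v Hx Hy Hp Hv).
Qed.

(** [halftree a b] is the component of [b] in the tree with the edge [ab] removed. *)
Definition halftree (a b v : V) : Prop := exists r, segment (a :: b :: r) a v.

Lemma halftree_self a b : adj a b -> halftree a b b.
Proof. intros H. exists []. now apply segment_pair. Qed.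

Lemma halftree_dichotomy a b v : adj a b -> halftree a b v \/ halftree b a v.
Proof.
  intros Hab. destruct (segment_exists a v) as [P HP].
  rewrite (walk_head (proj1 HP)) in HP. destruct (tl P) as [|c r].
  - right. exists []. destruct HP as [[_ [_ H3]] _]. simpl in H3. inversion H3; subst v.
    now apply segment_pair, adj_sym.
  - destruct (classic (c = b)) as [->|Ncb]; [left; now exists r|].
    right. exists (c :: r).
    change (b :: a :: c :: r) with ([b; a] ++ tl (a :: c :: r)).
    apply segment_cat with (w := a); [now apply segment_pair, adj_sym|auto|].
    intros x y _ E1 E2. simpl in E1, E2. inversion E1; inversion E2; subst. congruence.
Qed.

Lemma halftree_exclusive a b v : halftree a b v -> halftree b a v -> False.
Proof.
  intros [r H1] [r' H2].
  pose proof (segment_unique H1 (segment_tl H2)) as E. inversion E; subst r'.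
  destruct H2 as [_ N]. apply (N 0 b b); reflexivity.
Qed.

Lemma halftree_cross a b x w rx rw : segment (a :: b :: rx) a x -> segment (b :: a :: rw) b w ->
  segment (rev (b :: rx) ++ a :: rw) x w.
Proof.
  intros Hx Hw. change (a :: rw) with (tl (b :: a :: rw)). apply segment_cat with (w := b).
  - exact (segment_rev (segment_tl Hx)).
  - exact Hw.
  - intros c d L E1 E2. rewrite length_rev in L, E1. rewrite nth_error_rev_pred in E1 by auto.
    simpl in E2. injection E2 as <-. destruct rx as [|r0 rx]; simpl in E1; [discriminate|].
    injection E1 as <-. intros ->. destruct Hx as [_ N]. apply (N 0 a a); reflexivity.
Qed.

(* A vertex [w] of [halftree b a] on the segment from [x] to [y] would make that segment pass
   through [b] both before and after [w]. *)
Lemma halftree_convex a b : adj a b -> convex (halftree a b).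
Proof.
  intros Hab p x y w [rx Hx] [ry Hy] Hp Hw.
  destruct (halftree_dichotomy w Hab) as [|[rw Hwr]]; [assumption|exfalso].
  apply In_nth_error in Hw. destruct Hw as [i Ei].
  pose proof (halftree_cross Hx Hwr) as P1. pose proof (halftree_cross Hwr Hy) as P2.
  pose proof (segment_unique (segment_firstn i Hp Ei) P1) as F1.
  pose proof (segment_unique (segment_skipn i Hp Ei) P2) as F2.
  assert (Li : length (firstn (S i) p) = S i).
  { rewrite length_firstn. assert (i < length p) by (apply nth_error_Some; congruence). lia. }
  rewrite F1, length_app, length_rev in Li. simpl in Li.
  assert (B1 : nth_error p (length rx) = Some b).
  { assert (H : nth_error (firstn (S i) p) (length rx) = Some b).
    { rewrite F1, nth_error_app1 by (rewrite length_rev; simpl; lia).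
      rewrite nth_error_rev. simpl length. destruct (Nat.ltb_spec (length rx) (S (length rx))); [|lia].
      now replace (S (length rx) - S (length rx)) with 0 by lia. }
    rewrite nth_error_firstn in H. destruct (Nat.ltb_spec (length rx) (S i)); [auto|discriminate]. }
  assert (B2 : nth_error p (i + (length rw + 1)) = Some b).
  { rewrite <- nth_error_skipn, F2, nth_error_app2 by (rewrite length_rev; simpl; lia).
    rewrite length_rev. simpl. now replace (length rw + 1 - S (length rw)) with 0 by lia. }
  pose proof (segment_nth_inj _ _ Hp B1 B2). lia.
Qed.

(** A vertex beyond the last edge [uw] of a segment [a b ... u w] is at least as far from any
    vertex outside [halftree a b] as [w] is from [a]. *)
Lemma halftree_far a b L0 u w t v P :
  segment (L0 ++ [u; w]) a w -> nth_error (L0 ++ [u; w]) 1 = Some b ->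
  halftree u w t -> ~ halftree a b v -> segment P v t -> length (L0 ++ [u; w]) <= length P.
Proof.
  intros HL Hb [rt Ht] Hv HP.
  assert (M1 : segment ((L0 ++ [u; w]) ++ rt) a t).
  { change rt with (tl (w :: rt)). apply segment_cat with (w := w); auto; [apply (segment_tl Ht)|].
    intros x y L E1 E2. rewrite length_app in E1. simpl in E1.
    rewrite nth_error_app2 in E1 by lia. replace (length L0 + 2 - 2 - length L0) with 0 in E1 by lia.
    simpl in E1, E2. inversion E1; subst x. destruct rt as [|r0 rt]; simpl in E2; [discriminate|].
    inversion E2; subst y. intro; subst. destruct Ht as [_ N]. apply (N 0 r0 r0); reflexivity. }
  destruct (segment_exists a v) as [Pv HPv].
  pose proof (walk_head (proj1 HPv)) as EPv.
  assert (W : segment (rev Pv ++ tl ((L0 ++ [u; w]) ++ rt)) v t).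
  { apply segment_cat with (w := a); auto; [now apply segment_rev|].
    intros x y L E1 E2. rewrite length_rev in L, E1. rewrite nth_error_rev_pred in E1 by auto.
    rewrite nth_error_app1 in E2 by (rewrite !length_app; simpl; lia).
    rewrite Hb in E2. inversion E2; subst y. intro; subst x. apply Hv.
    rewrite EPv in HPv, E1. destruct (tl Pv) as [|r0 rv]; simpl in E1; [discriminate|].
    inversion E1; subst r0. exists rv. auto. }
  rewrite (segment_unique HP W), (length_app (rev Pv)), length_rev.
  assert (T1 : length (tl ((L0 ++ [u; w]) ++ rt)) = length ((L0 ++ [u; w]) ++ rt) - 1)
    by (destruct ((L0 ++ [u; w]) ++ rt); simpl; lia).
  rewrite T1, (length_app (L0 ++ [u; w]) rt).
  pose proof (walk_length (proj1 HPv)). lia.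
Qed.

Lemma convex_halftree_step Z (a b v : V) : convex Z -> Z a -> Z v -> halftree a b v -> Z b.
Proof. intros HZ Ha Hv [r Hr]. apply (HZ _ _ _ b Ha Hv Hr). simpl; auto. Qed.


Definition branching (v : V) : Prop := exists a c, adj v a /\ adj v c /\ a <> c.

Lemma branching_convex : convex branching.
Proof.
  intros P x y v Hx Hy [[H1 [H2 H3]] N] Hv. apply In_nth_error in Hv. destruct Hv as [[|i] Ei].
  { rewrite H2 in Ei. inversion Ei; subst; auto. }
  assert (Hi : S i < length P) by (apply nth_error_Some; congruence).
  destruct (Nat.eq_dec (S i) (length P - 1)) as [Ei'|Ei'].
  { rewrite <- Ei', Ei in H3. inversion H3; subst; auto. }
  destruct (nth_error P i) as [a|] eqn:Fa; [|apply nth_error_None in Fa; lia].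
  destruct (nth_error P (S (S i))) as [c|] eqn:Fc; [|apply nth_error_None in Fc; lia].
  exists a, c. split; [apply adj_sym; eapply H1; eauto|]. split; [eapply H1; eauto|].
  eapply N; eauto.
Qed.

Lemma no_branching_single_edge (p q : V) : adj p q -> (forall v, ~ branching v) ->
  forall v, v = p \/ v = q.
Proof.
  intros Hpq Hn.
  assert (U : forall v a c, adj v a -> adj v c -> a = c).
  { intros v a c H1 H2. apply NNPP. intros H3. apply (Hn v). exists a, c. auto. }
  intros v. destruct (segment_exists p v) as [P HP].
  rewrite (walk_head (proj1 HP)) in HP. destruct (tl P) as [|c [|d r]].
  - left. destruct HP as [[_ [_ H]] _]. simpl in H. congruence.
  - right. destruct HP as [[H [_ E]] _]. simpl in E. inversion E; subst c.
    apply is_path_nth_cons2 in H. apply (U p); tauto.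
  - exfalso. destruct HP as [[H _] N].
    apply is_path_nth_cons2 in H. destruct H as [Hpc H].
    apply is_path_nth_cons2 in H. destruct H as [Hcd _].
    assert (c = q) as -> by (apply (U p); auto).
    assert (d = p) as -> by (apply (U q); auto; now apply adj_sym).
    apply (N 0 p p); reflexivity.
Qed.

End Tree.

Section Action.
Variable G : Type.
Variables (mul : G -> G -> G) (inv : G -> G) (e : G).
Hypothesis Hgrp : is_group mul inv e.
Variable V : Type.
Variable adj : V -> V -> Prop.
Hypothesis Htree : is_tree adj.
Variable act : G -> V -> V.
Hypothesis Hact : is_action mul e act.
Hypothesis Haut : by_automorphisms adj act.
Implicit Types (Z : V -> Prop).

Lemma act_id x : act e x = x.
Proof. apply Hact. Qed.

Lemma act_mul g h x : act (mul g h) x = act g (act h x).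
Proof. apply Hact. Qed.

Lemma act_invK g x : act (inv g) (act g x) = x.
Proof. rewrite <- act_mul, (proj1 (proj2 (proj2 (proj2 Hgrp)))). apply act_id. Qed.

Lemma act_Kinv g x : act g (act (inv g) x) = x.
Proof. rewrite <- act_mul, (proj2 (proj2 (proj2 (proj2 Hgrp)))). apply act_id. Qed.

Lemma act_inj g x y : act g x = act g y -> x = y.
Proof. intros H. rewrite <- (act_invK g x), <- (act_invK g y). congruence. Qed.

Lemma segment_act g p x y : segment adj p x y -> segment adj (map (act g) p) (act g x) (act g y).
Proof.
  intros [H1 H2]. split.
  - apply walk_map with (R := adj); auto. intros a b. apply Haut.
  - apply no_backtrack_nth_map; auto. apply act_inj.
Qed.

Lemma convex_translate Z d : convex adj Z -> convex adj (fun v => Z (act d v)).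
Proof.
  intros HZ P x y v Hx Hy HP Hv. apply (HZ _ _ _ _ Hx Hy (segment_act d HP)). now apply in_map.
Qed.

Lemma fixed_segment g P x y : act g x = x -> act g y = y -> segment adj P x y ->
  forall v, In v P -> act g v = v.
Proof.
  intros Hx Hy HP v Hv. pose proof (segment_act g HP) as H. rewrite Hx, Hy in H.
  pose proof (segment_unique Htree H HP) as E.
  apply In_nth_error in Hv. destruct Hv as [i Ei].
  assert (nth_error (map (act g) P) i = Some (act g v)) by (apply map_nth_error; auto).
  rewrite E, Ei in H0. congruence.
Qed.

Lemma fixed_segment_short k g P x y : k_acylindrical e adj act k -> g <> e ->
  act g x = x -> act g y = y -> segment adj P x y -> length P <= S k.
Proof.
  intros Hacyl Hg Hx Hy HP. destruct (Nat.le_gt_cases (length P) (S k)); auto. exfalso. apply Hg.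
  apply (Hacyl P g); [eapply segment_geodesic; eauto|lia|exact (fixed_segment Hx Hy HP)].
Qed.

(* The last common vertex of the segments from c to z and from c = g c to g z lies on the
   segment from z to g z, hence in Z. *)
Lemma fixed_point_in_convex g c Z z : act g c = c -> convex adj Z -> Z z ->
  (forall v, Z v -> Z (act g v)) -> exists f, act g f = f /\ Z f.
Proof.
  intros Hc HZ Hz Hinv.
  destruct (segment_exists Htree c z) as [P HP].
  pose proof (segment_act g HP) as HQ. rewrite Hc in HQ.
  set (Q := map (act g) P) in *.
  assert (L0 : 1 <= length P) by (apply (walk_length (proj1 HP))).
  destruct (max_index (fun j => nth_error P j = nth_error Q j) (length P - 1)) as [j [Hj1 [Hj2 Hj3]]].
  { destruct HP as [[_ [A _]] _]. destruct HQ as [[_ [B _]] _]. congruence. }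
  destruct (nth_error P j) as [b|] eqn:Eb; [|apply nth_error_None in Eb; lia].
  assert (Hb : act g b = b).
  { assert (nth_error Q j = Some (act g b)) by (apply map_nth_error; auto). congruence. }
  exists b. split; auto.
  destruct (Nat.eq_dec j (length P - 1)) as [->|Ej].
  { destruct HP as [[_ [_ A]] _]. rewrite A in Eb. inversion Eb; subst; auto. }
  assert (Eb' : nth_error Q j = Some b) by congruence.
  assert (W : segment adj (rev (skipn j P) ++ tl (skipn j Q)) z (act g z)).
  { apply segment_cat with (w := b).
    - apply (segment_rev Htree). eapply segment_skipn; eauto.
    - eapply segment_skipn; eauto.
    - intros a1 a2 L E1 E2. rewrite length_rev in L, E1. rewrite nth_error_rev_pred in E1 by auto.
      rewrite nth_error_skipn in E1, E2. intro; subst a2.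
      apply (Hj3 (j + 1)); [lia|]. rewrite E1, E2. auto. }
  apply (HZ _ z (act g z) b Hz (Hinv z Hz) W). apply in_or_app. left.
  rewrite <- in_rev. apply (nth_error_In _ 0). rewrite nth_error_skipn, Nat.add_0_r. auto.
Qed.

Lemma min_displacement g (v0 : V) : exists x0 P, segment adj P x0 (act g x0) /\
  forall x Q, segment adj Q x (act g x) -> length P <= length Q.
Proof.
  destruct (least_nat (fun n => exists x P, segment adj P x (act g x) /\ length P = n))
    as [n [[x0 [P [HP <-]]] Hmin]].
  { destruct (segment_exists Htree v0 (act g v0)) as [P HP]. eauto. }
  exists x0, P. split; auto. intros x Q HQ. apply Hmin. eauto.
Qed.

(* Let a be a point of Z nearest to x0 and r the vertex before it.  If x0 is not in Z, the
   segment from x0 to g x0 runs x0 ... r a ... (g a) (g r) ... (g x0), since r and g r lie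
   outside Z while the segment from a to g a lies inside; so it is longer than the one from
   a to g a, contradicting the minimality of the displacement of x0. *)
Lemma displacement_minimizer_in_convex g x0 P Z :
  (forall v, act g v <> v) -> segment adj P x0 (act g x0) ->
  (forall x Q, segment adj Q x (act g x) -> length P <= length Q) ->
  convex adj Z -> (exists z, Z z) -> (forall v, Z v -> Z (act g v)) ->
  (forall v, Z (act g v) -> Z v) -> Z x0.
Proof.
  intros Hfree HP Hmin HZ [z0 Hz0] Hfwd Hbwd.
  destruct (nearest_point Htree Z x0 z0 Hz0) as [a [R [Ha [HR Hnear]]]].
  destruct (Nat.le_gt_cases (length R) 1) as [R1|R2].
  { now rewrite (walk_length1 (proj1 HR) R1). }
  destruct (nth_error R (length R - 2)) as [r|] eqn:Er; [|apply nth_error_None in Er; lia].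
  assert (Hr : ~ Z r) by (apply (Hnear (length R - 2)); [lia|exact Er]).
  destruct (segment_exists Htree a (act g a)) as [S HS].
  assert (HS2 : 2 <= length S).
  { destruct (Nat.le_gt_cases (length S) 1) as [S1|]; [|lia].
    exfalso. apply (Hfree a). symmetry. exact (walk_length1 (proj1 HS) S1). }
  assert (HSZ : forall s, In s S -> Z s) by (intros s; exact (HZ S a (act g a) s Ha (Hfwd a Ha) HS)).
  pose proof (segment_rev Htree (segment_act g HR)) as HgR.
  assert (HgR1 : nth_error (rev (map (act g) R)) 1 = Some (act g r)).
  { rewrite <- (nth_error_rev_pred (rev (map (act g) R))), rev_involutive;
      rewrite length_rev, length_map; [|lia]. now rewrite nth_error_map, Er. }
  assert (HT1 : segment adj (S ++ tl (rev (map (act g) R))) a (act g x0)).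
  { apply segment_cat with (w := act g a); auto.
    intros s s' _ Es Es'. rewrite HgR1 in Es'. injection Es' as <-. intros ->.
    apply Hr, Hbwd, HSZ. eapply nth_error_In; eauto. }
  assert (HT : segment adj (R ++ tl (S ++ tl (rev (map (act g) R)))) x0 (act g x0)).
  { apply segment_cat with (w := a); auto.
    intros r' s _ Er' Es. rewrite Er in Er'. injection Er' as <-. intros ->.
    rewrite nth_error_app1 in Es by lia. apply Hr, HSZ. eapply nth_error_In; eauto. }
  pose proof (Hmin a S HS) as HPS. rewrite (segment_unique Htree HP HT) in HPS.
  rewrite (length_app_tl_walk _ (proj1 HT1)), (length_app_tl_walk _ (proj1 HgR)) in HPS.
  rewrite length_rev, length_map in HPS. lia.
Qed.

Section Minimal.
Hypothesis Hmin : minimal_action adj act.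

Lemma minimal_convex Z : convex adj Z -> (exists v, Z v) ->
  (forall g v, Z v -> Z (act g v)) -> forall v, Z v.
Proof. intros HC Hne HI. apply Hmin; auto. now apply convex_subtree. Qed.

(* The vertices with no translate in [halftree a b] form a convex invariant set missing [b]. *)
Lemma halftree_translate a b v : adj a b -> exists d, halftree adj a b (act d v).
Proof.
  intros Hab. apply NNPP. intros Hn.
  set (C := fun v => forall d, ~ halftree adj a b (act d v)).
  assert (HC : forall v, C v).
  { apply minimal_convex.
    - intros p x y w Hx Hy Hp Hw d Hd.
      assert (Hout : forall u, C u -> halftree adj b a (act d u)).
      { intros u Hu. destruct (halftree_dichotomy Htree _ _ (act d u) Hab); [|auto].
        exfalso; eapply Hu; eauto. }
      apply (halftree_exclusive Htree Hd).
      apply (halftree_convex Htree (adj_sym Htree _ _ Hab) _ (Hout x Hx) (Hout y Hy)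
               (segment_act d Hp)).
      now apply in_map.
    - exists v. intros d Hd. apply Hn. eauto.
    - intros g u Hu d Hd. apply (Hu (mul d g)). now rewrite act_mul. }
  apply (HC b e). rewrite act_id. now apply halftree_self.
Qed.

Hypothesis Hninv : without_inversions adj act.

(* Without a branching vertex the tree is one edge [pq], and [{p}] would be invariant. *)
Lemma branching_exists p q : adj p q -> exists v, branching adj v.
Proof.
  intros Hpq. apply NNPP. intros Hn.
  pose proof (no_branching_single_edge Htree _ _ Hpq (fun v Hv => Hn (ex_intro _ v Hv))) as Two.
  assert (Hp : forall v, v = p).
  { apply minimal_convex.
    - intros P x y v -> -> HP Hv. rewrite (segment_unique Htree HP (segment_refl adj p)) in Hv.
      destruct Hv as [|[]]; auto.
    - exists p; auto.
    - intros g v ->. destruct (Two (act g p)) as [E|E]; auto. exfalso.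
      destruct (Two (act g q)) as [E'|E'].
      + apply (@Hninv g p q Hpq). auto.
      + apply (adj_irrefl Htree q). pose proof (proj1 (Haut g p q) Hpq) as H. now rewrite E, E' in H. }
  apply (adj_irrefl Htree p). rewrite <- (Hp q) at 2. auto.
Qed.

Lemma branching_everywhere p q : adj p q -> forall v, branching adj v.
Proof.
  intros Hpq. apply minimal_convex; [apply branching_convex, Htree|exact (branching_exists Hpq)|].
  intros g v [a [c [H1 [H2 H3]]]]. exists (act g a), (act g c).
  split; [now apply Haut|]. split; [now apply Haut|]. intro E. apply H3. eapply act_inj; eauto.
Qed.

Lemma long_segment p q : adj p q -> forall n, exists L0 u w, segment adj (L0 ++ [u; w]) p w /\
  nth_error (L0 ++ [u; w]) 1 = Some q /\ adj u w /\ n <= length (L0 ++ [u; w]).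
Proof.
  intros Hpq n. induction n as [|n IH].
  - exists [], p, q. split; [now apply segment_pair|]. split; [reflexivity|split; [auto|simpl; lia]].
  - destruct IH as [L0 [u [w [H1 [H2 [Huw H3]]]]]].
    destruct (branching_everywhere Hpq w) as [a [c [Ha [Hc Hac]]]].
    assert (exists w', adj w w' /\ w' <> u) as [w' [Hw' Nw']].
    { destruct (classic (a = u)); [exists c; split; auto; congruence|exists a; auto]. }
    exists (L0 ++ [u]), w, w'.
    assert (E : (L0 ++ [u]) ++ [w; w'] = (L0 ++ [u; w]) ++ tl [w; w'])
      by (rewrite <- !app_assoc; reflexivity).
    rewrite E. split; [|split; [|split; [exact Hw'|]]].
    + apply segment_cat with (w := w); auto; [now apply segment_pair|].
      intros x y L E1 E2. rewrite length_app in E1. simpl in E1.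
      rewrite nth_error_app2 in E1 by lia. replace (length L0 + 2 - 2 - length L0) with 0 in E1 by lia.
      simpl in E1, E2. congruence.
    + rewrite nth_error_app1; auto. rewrite length_app; simpl; lia.
    + rewrite !length_app in *. simpl in *. lia.
Qed.

Section Normal.
Variable k : nat.
Hypothesis Hacyl : k_acylindrical e adj act k.
Variable M : G -> Prop.
Hypothesis HM : is_subgroup mul inv e M.
Hypothesis Hnorm : normal_in_group mul inv M.

Definition M_invariant (Z : V -> Prop) : Prop := forall g v, M g -> Z v -> Z (act g v).

Lemma M_invariant_translate Z d : M_invariant Z -> M_invariant (fun v => Z (act d v)).
Proof.
  intros HI g v Hg Hv. simpl.
  replace (act d (act g v)) with (act (mul (mul d g) (inv d)) (act d v)).
  - apply HI; [apply Hnorm|]; assumption.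
  - now rewrite !act_mul, act_invK.
Qed.

(* Conjugating, the fixed point of [m] may be assumed deep inside [halftree p q]; but [m] also
   fixes a point of [Z], and the segment between the two is longer than acylindricity allows. *)
Lemma elliptic_adj_closed m c Z z0 p q : M m -> m <> e -> act m c = c -> convex adj Z -> Z z0 ->
  M_invariant Z -> adj p q -> Z p -> Z q.
Proof.
  intros Hm Hme Hc HZ Hz0 HI Hpq Hp.
  destruct (long_segment Hpq (S (S k))) as [L0 [u [w [HL [Hq1 [Huw HLn]]]]]].
  destruct (halftree_translate c Huw) as [d Hd].
  assert (HZd : Z (act d (act (inv d) z0))) by now rewrite act_Kinv.
  destruct (fixed_point_in_convex _ Hc (convex_translate d HZ) HZd
    (fun v => M_invariant_translate d HI v Hm)) as [f [Hf HZf]].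
  destruct (segment_exists Htree c f) as [P HP].
  pose proof (fixed_segment_short Hacyl Hme Hc Hf HP) as Hshort.
  destruct (classic (halftree adj p q (act d f))) as [Hin|Hout].
  - exact (convex_halftree_step HZ Hp HZf Hin).
  - exfalso. pose proof (halftree_far Htree L0 HL Hq1 Hd Hout (segment_rev Htree (segment_act d HP))).
    rewrite length_rev, length_map in H. lia.
Qed.

(* A translate of the point of minimal displacement of [m] lies in [halftree p q], and that
   point belongs to every convex [m]-invariant set. *)
Lemma hyperbolic_adj_closed m Z z0 p q : M m -> (forall v, act m v <> v) ->
  convex adj Z -> Z z0 -> M_invariant Z -> adj p q -> Z p -> Z q.
Proof.
  intros Hm Hfree HZ Hz0 HI Hpq Hp.
  destruct (min_displacement m z0) as [x0 [P [HP HPmin]]].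
  destruct (halftree_translate x0 Hpq) as [d Hd].
  assert (HZ' : Z (act d x0)).
  { apply (displacement_minimizer_in_convex (Z := fun v => Z (act d v)) Hfree HP HPmin).
    - exact (convex_translate d HZ).
    - exists (act (inv d) z0). now rewrite act_Kinv.
    - exact (fun v => M_invariant_translate d HI v Hm).
    - intros v Hv. rewrite <- (act_invK m v).
      apply (M_invariant_translate d HI); auto. now apply HM. }
  exact (convex_halftree_step HZ Hp HZ' Hd).
Qed.

Lemma normal_subgroup_minimal Z : (exists m, M m /\ m <> e) ->
  convex adj Z -> (exists z, Z z) -> M_invariant Z -> forall v, Z v.
Proof.
  intros [m [Hm Hme]] HZ [z0 Hz0] HI v. apply NNPP. intros Hv.
  destruct (exit_edge Htree Z z0 v Hz0 Hv) as [p [q [Hpq [Hp Hq]]]].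
  destruct (classic (exists c, act m c = c)) as [[c Hc]|Hfree].
  - apply Hq. eapply elliptic_adj_closed; eassumption.
  - apply Hq. eapply hyperbolic_adj_closed; try eassumption. intros u Hu. eauto.
Qed.

Section FinitelyGenerated.
Variable H : G -> Prop.
Hypothesis HH : is_subgroup mul inv e H.
Hypothesis HMH : forall m, M m -> H m.
Hypothesis HMe : exists m, M m /\ m <> e.
Variable gens : list G.
Hypothesis Hgens : forall x, H x <-> generated_by mul inv e gens x.
Variable v0 : V.
Variable K : list V.
Hypothesis HK0 : In v0 K.
Hypothesis HKgens : forall s, In s gens -> In (act s v0) K.
Hypothesis HKconn : forall a, In a K -> exists p, walk (within adj K) p v0 a.

Definition H_translate (v : V) : Prop := exists g a, H g /\ In a K /\ act g a = v.

Definition H_translate_edge (x y : V) : Prop :=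
  adj x y /\ exists g a b, H g /\ In a K /\ In b K /\ act g a = x /\ act g b = y.

Definition H_linked (x y : V) : Prop := exists p, walk H_translate_edge p x y.

Lemma H_linked_refl x : H_linked x x.
Proof. exists [x]. apply walk_refl. Qed.

Lemma H_linked_trans x y z : H_linked x y -> H_linked y z -> H_linked x z.
Proof. intros [p Hp] [q Hq]. exists (p ++ tl q). exact (walk_cat Hp Hq). Qed.

Lemma H_linked_sym x y : H_linked x y -> H_linked y x.
Proof.
  intros [p Hp]. exists (rev p). apply walk_rev; auto.
  intros a b [Hab [g [c [d [Hg [Hc [Hd [<- <-]]]]]]]].
  split; [now apply adj_sym|]. exists g, d, c. auto.
Qed.

Lemma H_linked_act g x y : H g -> H_linked x y -> H_linked (act g x) (act g y).
Proof.
  intros Hg [p Hp]. exists (map (act g) p). apply walk_map with (R := H_translate_edge); auto.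
  intros a b [Hab [h [c [d [Hh [Hc [Hd [<- <-]]]]]]]]. split; [now apply Haut|].
  exists (mul g h), c, d. rewrite !act_mul. repeat split; auto. now apply HH.
Qed.

Lemma H_linked_K a : In a K -> H_linked v0 a.
Proof.
  intros Ha. destruct (HKconn a Ha) as [p Hp]. exists p. eapply walk_mono; [|exact Hp].
  intros x y [Hxy [Hx Hy]]. split; auto. exists e, x, y. rewrite !act_id.
  repeat split; auto. apply HH.
Qed.

(* The elements [h] with [v0] linked to [h v0] form a subgroup containing the generators. *)
Lemma H_linked_orbit h : H h -> H_linked v0 (act h v0).
Proof.
  intros Hh. apply Hgens in Hh.
  apply (Hh (fun g => H g /\ H_linked v0 (act g v0))); [split; [|split]|].
  - split; [apply HH|]. rewrite act_id. apply H_linked_refl.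
  - intros a b [Ha La] [Hb Lb]. split; [now apply HH|].
    rewrite act_mul. exact (H_linked_trans La (H_linked_act Ha Lb)).
  - intros a [Ha La]. split; [now apply HH|].
    pose proof (H_linked_act (proj2 (proj2 HH) a Ha) La) as L. rewrite act_invK in L.
    now apply H_linked_sym.
  - intros s Hs. split; [apply Hgens; intros K' _ HK'; auto|].
    now apply H_linked_K, HKgens.
Qed.

Lemma H_translate_linked v : H_translate v -> H_linked v0 v.
Proof.
  intros [g [a [Hg [Ha <-]]]].
  exact (H_linked_trans (H_linked_orbit Hg) (H_linked_act Hg (H_linked_K a Ha))).
Qed.

Lemma segment_H_translate_edges x y p : H_translate x -> H_translate y -> segment adj p x y ->
  is_path_nth H_translate_edge p.
Proof.
  intros Hx Hy Hp.
  destruct (H_linked_trans (H_linked_sym (H_translate_linked Hx)) (H_translate_linked Hy)) as [W HW].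
  refine (segment_path_of_walk Htree _ HW Hp). now intros a b [].
Qed.

Lemma H_translate_convex : convex adj H_translate.
Proof.
  intros p x y v Hx Hy Hp Hv. pose proof (segment_H_translate_edges Hx Hy Hp) as HE.
  apply In_nth_error in Hv as [[|i] Ei].
  { destruct Hp as [[_ [H0 _]] _]. rewrite H0 in Ei. now injection Ei as <-. }
  destruct (nth_error p i) as [a|] eqn:Ea.
  - destruct (HE i a v Ea Ei) as [_ [g [c [d [Hg [Hc [Hd [_ <-]]]]]]]]. now exists g, d.
  - apply nth_error_None in Ea. assert (S i < length p) by (apply nth_error_Some; congruence). lia.
Qed.

Lemma H_translate_all v : H_translate v.
Proof.
  revert v. apply normal_subgroup_minimal; auto.
  - exact H_translate_convex.
  - exists v0, e, v0. split; [apply HH|split; auto]. apply act_id.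
  - intros g v Hg [h [a [Hh [Ha <-]]]]. exists (mul g h), a. rewrite act_mul.
    split; auto. apply HH; auto.
Qed.

Lemma H_cocompact : cocompact_on H adj act.
Proof.
  split.
  - exists K. intros v. destruct (H_translate_all v) as [g [a [Hg [Ha <-]]]]. now exists g, a.
  - exists (list_prod K K). intros x y Hxy.
    pose proof (segment_H_translate_edges (H_translate_all x) (H_translate_all y)
                  (segment_pair adj _ _ Hxy)) as HE.
    destruct (HE 0 x y eq_refl eq_refl) as [_ [g [a [b [Hg [Ha [Hb [Hx Hy]]]]]]]].
    exists g, a, b. split; auto. split; auto. now apply in_prod.
Qed.

End FinitelyGenerated.

End Normal.

End Minimal.

End Action.

Theorem lemma5p1 (G : Type) (mul : G -> G -> G) (inv : G -> G) (e : G)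
  (V : Type) (adj : V -> V -> Prop) (act : G -> V -> V) (k : nat)
  (H M : G -> Prop) :
  is_group mul inv e ->
  is_tree adj ->
  is_action mul e act ->
  by_automorphisms adj act ->
  without_inversions adj act ->
  k_acylindrical e adj act k ->
  cocompact_on (fun _ => True) adj act ->
  minimal_action adj act ->
  is_subgroup mul inv e H ->
  finitely_generated mul inv e H ->
  is_subgroup mul inv e M ->
  (forall m, M m -> H m) ->
  (exists m, M m /\ m <> e) ->
  normal_in_group mul inv M ->
  cocompact_on H adj act.
Proof.
  intros Hgrp Htree Hact Haut Hninv Hacyl _ Hmin HH [gens Hgens] HM HMH HMe Hnorm.
  destruct (classic (exists v : V, True)) as [[v0 _]|Hempty].
  - destruct (connected_hull (map (fun s => act s v0) gens) (walk_exists Htree v0))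
      as [K [HK0 [HKgens HKconn]]].
    apply (H_cocompact Hgrp Htree Hact Haut Hmin Hninv Hacyl HM Hnorm HH HMH HMe Hgens HK0);
      [|exact HKconn].
    intros s Hs. apply HKgens. exact (in_map (fun s => act s v0) _ _ Hs).
  - split; exists []; intros v; exfalso; apply Hempty; now exists v.
Qed.
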